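(* In the FHMA network described below, let $N_{\mathrm{opt}}$ be the integer number of sub-bands $N\ge1$ minimizing the mean local delay $D(N)$. Then $$N_{\mathrm{opt}}\in[\lfloor t_0\rfloor,\lceil t_0\rceil+2],\qquad t_0=\lambda c_d r_0^d\theta^{\delta}C(\delta)+\theta r_0^\alpha WN_0.$$
   Context: Model: transmitters form a homogeneous Poisson point process $\Phi$ of intensity $\lambda>0$ in $\mathbb{R}^d$; the typical receiver is at the origin and its desired transmitter $x_0\in\Phi$ is at distance $r_0>0$; probabilities are under the Palm distribution at $x_0$. Time is slotted. Path loss $\kappa r^{-\alpha}$ with $\alpha>d$, $\delta=d/\alpha\in(0,1)$. Power fading coefficients are i.i.d. exponential with mean $1$ over transmitters and slots, independent of everything. Unit power, always backlogged transmitters. Bandwidth $W$, noise power spectral density $N_r$, $N_0=N_r/\kappa$, SINR threshold $\theta>0$. $c_d$ is the volume of the unit ball in $\mathbb{R}^d$, $C(\delta)=\Gamma(1+\delta)\Gamma(1-\delta)=\frac{\pi\delta}{\sin(\pi\delta)}$. FHMA with $N$ sub-bands: each transmitter $x$ independently picks a sub-band $\mathcal{S}_k(x)$ uniformly from $\{1,\dots,N\}$ in each slot $k$; $\mathrm{SINR}_k=\frac{h_{k,x_0}r_0^{-\alpha}}{WN_0/N+\sum_{x\in\Phi\setminus\{x_0\}}h_{k,x}|x|^{-\alpha}\mathbf{1}(\mathcal{S}_k(x)=\mathcal{S}_k(x_0))}$; a slot is successful if $\mathrm{SINR}_k>\theta$; the local delay is the number of slots until the $N$-th successful slot and $D(N)$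 is its mean. (The mean equals $D(N)=N\exp\left(\frac{\lambda c_d r_0^d\theta^{\delta}C(\delta)}{(N-1)^{1-\delta}N^{\delta}}+\frac{\theta r_0^\alpha WN_0}{N}\right)$, with $D(1)=\infty$.) *)

From Stdlib Require Import Reals Lra Lia.
From Coquelicot Require Import Coquelicot.
Open Scope R_scope.

(* c_d = volume of the unit ball in R^d = pi^(d/2) / Gamma(d/2 + 1). *)
Fixpoint ball_vol (d : nat) : R :=
  match d with
  | O => 1
  | S O => 2
  | S (S k as k1) => 2 * PI / INR (S k1) * ball_vol k
  end.

(* C(delta) = Gamma(1+delta) Gamma(1-delta) = pi delta / sin(pi delta). *)
Definition Cdelta (delta : R) : R := PI * delta / sin (PI * delta).

(* Only N >= 1 is
   meaningful; N = 0 is also mapped to +infinity and excluded below. *)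
Definition mean_delay (lambda r0 theta alpha W N0 : R) (d N : nat) : Rbar :=
  let delta := INR d / alpha in
  match N with
  | O => p_infty
  | S O => p_infty
  | _ =>
    Finite (INR N *
      exp (lambda * ball_vol d * r0 ^ d * Rpower theta delta * Cdelta delta
             / (Rpower (INR N - 1) (1 - delta) * Rpower (INR N) delta)
           + theta * Rpower r0 alpha * W * N0 / INR N))
  end.

Definition is_opt_subbands (lambda r0 theta alpha W N0 : R) (d N : nat) : Prop :=
  (1 <= N)%nat /\
  forall M : nat, (1 <= M)%nat ->
    Rbar_le (mean_delay lambda r0 theta alpha W N0 d N)
            (mean_delay lambda r0 theta alpha W N0 d M).

(* Write E(n) = a / ((n-1)^(1-s) n^s) + b / n, so that D(N) = N exp(E(N)) with
   a + b = t0.  Weighted AM-GM, applied to (n-1)^(1-s) n^s and to its inverse,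
   squeezes the decrement E(n) - E(n+1) between (a+b)/(n(n+1)) and (a+b)/(n(n-1)).
   Comparing with ln((n+1)/n), which lies strictly between 1/(n+1) and 1/n, shows
   that D decreases at n whenever n + 1 <= t0 and increases at n whenever
   n >= t0 + 2; an optimal N therefore satisfies t0 - 1 < N < t0 + 3. *)
From Stdlib Require Import Reals Lra Lia.
From Coquelicot Require Import Coquelicot.
Open Scope R_scope.

Lemma exp_convex s u v : 0 <= s <= 1 ->
  exp (s * u + (1 - s) * v) <= s * exp u + (1 - s) * exp v.
Proof.
  intros Hs. set (p := s * u + (1 - s) * v).
  (* tangent line of exp at p *)
  assert (Hu : exp p * (1 + (u - p)) <= exp u).
  { replace (exp u) with (exp p * exp (u - p)) by (rewrite <- exp_plus; f_equal; ring).
    apply Rmult_le_compat_l; [left; apply exp_pos | apply exp_ineq1_le]. }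
  assert (Hv : exp p * (1 + (v - p)) <= exp v).
  { replace (exp v) with (exp p * exp (v - p)) by (rewrite <- exp_plus; f_equal; ring).
    apply Rmult_le_compat_l; [left; apply exp_pos | apply exp_ineq1_le]. }
  assert (Hp : s * (exp p * (1 + (u - p))) + (1 - s) * (exp p * (1 + (v - p))) = exp p)
    by (unfold p; ring).
  nra.
Qed.

Lemma Rpower_weighted_am_gm s x y : 0 <= s <= 1 -> 0 < x -> 0 < y ->
  Rpower x (1 - s) * Rpower y s <= (1 - s) * x + s * y.
Proof.
  intros Hs Hx Hy. unfold Rpower. rewrite <- exp_plus.
  pose proof (exp_convex (1 - s) (ln x) (ln y) ltac:(lra)) as H.
  rewrite !exp_ln in H by assumption.
  replace (1 - (1 - s)) with s in H by ring. exact H.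
Qed.

Lemma Rpower_Rinv_base x s : 0 < x -> Rpower (/ x) s = / Rpower x s.
Proof.
  intros Hx. unfold Rpower. rewrite ln_Rinv by exact Hx.
  rewrite <- exp_Ropp. f_equal. ring.
Qed.

Lemma Rinv_Rpower_weighted_am_gm s x y : 0 <= s <= 1 -> 0 < x -> 0 < y ->
  / (Rpower x (1 - s) * Rpower y s) <= (1 - s) / x + s / y.
Proof.
  intros Hs Hx Hy.
  rewrite Rinv_mult, <- !Rpower_Rinv_base by assumption.
  pose proof (Rpower_weighted_am_gm s (/ x) (/ y) Hs
    (Rinv_0_lt_compat x Hx) (Rinv_0_lt_compat y Hy)).
  unfold Rdiv. lra.
Qed.

Definition weighted_power (s n : R) : R := Rpower (n - 1) (1 - s) * Rpower n s.

Lemma Rinv_weighted_power_decrement_bounds s n : 0 <= s <= 1 -> 2 <= n ->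
  / (n * (n + 1)) <= / weighted_power s n - / weighted_power s (n + 1) <= / (n * (n - 1)).
Proof.
  intros Hs Hn. unfold weighted_power. replace (n + 1 - 1) with n by ring.
  assert (Hpos : forall z t, 0 < Rpower z t) by (intros; apply exp_pos).
  split.
  - assert (Hlow : / (n - 1 + s) <= / (Rpower (n - 1) (1 - s) * Rpower n s)).
    { apply Rinv_le_contravar; [apply Rmult_lt_0_compat; apply Hpos|].
      pose proof (Rpower_weighted_am_gm s (n - 1) n Hs ltac:(lra) ltac:(lra)). lra. }
    pose proof (Rinv_Rpower_weighted_am_gm s n (n + 1) Hs ltac:(lra) ltac:(lra)) as Hup.
    assert (/ (n * (n + 1)) <= / (n - 1 + s) - ((1 - s) / n + s / (n + 1))).
    { replace (/ (n - 1 + s) - ((1 - s) / n + s / (n + 1)))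
        with ((n + (1 - s) ^ 2) / (n * (n + 1) * (n - 1 + s))) by (field; lra).
      replace (/ (n * (n + 1))) with ((n - 1 + s) / (n * (n + 1) * (n - 1 + s)))
        by (field; lra).
      apply Rmult_le_compat_r; [left; apply Rinv_0_lt_compat; nra | nra]. }
    lra.
  - pose proof (Rinv_Rpower_weighted_am_gm s (n - 1) n Hs ltac:(lra) ltac:(lra)) as Hup.
    assert (Hlow : / (n + s) <= / (Rpower n (1 - s) * Rpower (n + 1) s)).
    { apply Rinv_le_contravar; [apply Rmult_lt_0_compat; apply Hpos|].
      pose proof (Rpower_weighted_am_gm s n (n + 1) Hs ltac:(lra) ltac:(lra)). lra. }
    assert ((1 - s) / (n - 1) + s / n - / (n + s) <= / (n * (n - 1))).
    { replace ((1 - s) / (n - 1) + s / n - / (n + s))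
        with ((n - s ^ 2) / (n * (n - 1) * (n + s))) by (field; lra).
      replace (/ (n * (n - 1))) with ((n + s) / (n * (n - 1) * (n + s))) by (field; lra).
      apply Rmult_le_compat_r; [left; apply Rinv_0_lt_compat; nra | nra]. }
    lra.
Qed.

Definition delay_exponent (a b s n : R) : R := a / weighted_power s n + b / n.

Lemma delay_exponent_decrement_bounds a b s n : 0 <= a -> 0 <= b -> 0 <= s <= 1 -> 2 <= n ->
  (a + b) / (n * (n + 1)) <= delay_exponent a b s n - delay_exponent a b s (n + 1)
  <= (a + b) / (n * (n - 1)).
Proof.
  intros Ha Hb Hs Hn.
  assert (Hdiff : delay_exponent a b s n - delay_exponent a b s (n + 1)
    = a * (/ weighted_power s n - / weighted_power s (n + 1)) + b / (n * (n + 1))).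
  { assert (Hw : forall m, 0 < weighted_power s m)
      by (intros; apply Rmult_lt_0_compat; apply exp_pos).
    pose proof (Hw n). pose proof (Hw (n + 1)).
    unfold delay_exponent. field. repeat split; lra. }
  rewrite Hdiff.
  destruct (Rinv_weighted_power_decrement_bounds s n Hs Hn) as [Hlo Hhi].
  assert (Hbhi : b / (n * (n + 1)) <= b / (n * (n - 1))).
  { apply Rmult_le_compat_l; [exact Hb|]. apply Rinv_le_contravar; nra. }
  unfold Rdiv in *. split; nra.
Qed.

Lemma succ_lt_mul_exp n x : 0 < n -> / n <= x -> n + 1 < n * exp x.
Proof.
  intros Hn Hx.
  assert (0 < / n) by (apply Rinv_0_lt_compat; exact Hn).
  assert (1 + x < exp x) by (apply exp_ineq1; lra).
  assert (n * / n = 1) by (field; lra).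
  nra.
Qed.

Lemma mul_exp_lt_succ n x : 0 < n -> x * (n + 1) < 1 -> n * exp x < n + 1.
Proof.
  intros Hn Hx.
  assert (H1x : exp x * (1 - x) <= 1).
  { pose proof (exp_ineq1_le (- x)) as H. rewrite exp_Ropp in H.
    apply (Rmult_le_compat_l (exp x)) in H; [|left; apply exp_pos].
    rewrite Rinv_r in H by (apply Rgt_not_eq, exp_pos). lra. }
  pose proof (exp_pos x). nra.
Qed.

Definition fhma_delay (a b s n : R) : R := n * exp (delay_exponent a b s n).

Lemma fhma_delay_succ_lt a b s n : 0 <= a -> 0 <= b -> 0 <= s <= 1 -> 2 <= n ->
  n + 1 <= a + b -> fhma_delay a b s (n + 1) < fhma_delay a b s n.
Proof.
  intros Ha Hb Hs Hn Hab. unfold fhma_delay.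
  set (x := delay_exponent a b s n - delay_exponent a b s (n + 1)).
  replace (delay_exponent a b s n) with (delay_exponent a b s (n + 1) + x)
    by (unfold x; ring).
  rewrite exp_plus.
  assert (Hx : / n <= x).
  { apply Rle_trans with ((a + b) / (n * (n + 1))).
    - replace (/ n) with ((n + 1) / (n * (n + 1))) by (field; lra).
      apply Rmult_le_compat_r; [left; apply Rinv_0_lt_compat; nra | exact Hab].
    - apply delay_exponent_decrement_bounds; assumption. }
  pose proof (succ_lt_mul_exp n x ltac:(lra) Hx).
  pose proof (exp_pos (delay_exponent a b s (n + 1))). nra.
Qed.

Lemma fhma_delay_lt_succ a b s n : 0 <= a -> 0 <= b -> 0 <= s <= 1 -> 2 <= n ->
  a + b + 2 <= n -> fhma_delay a b s n < fhma_delay a b s (n + 1).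
Proof.
  intros Ha Hb Hs Hn Hab. unfold fhma_delay.
  set (x := delay_exponent a b s n - delay_exponent a b s (n + 1)).
  replace (delay_exponent a b s n) with (delay_exponent a b s (n + 1) + x)
    by (unfold x; ring).
  rewrite exp_plus.
  assert (Hx : x * (n + 1) < 1).
  { assert (x <= (n - 2) / (n * (n - 1))).
    { apply Rle_trans with ((a + b) / (n * (n - 1))).
      - apply delay_exponent_decrement_bounds; assumption.
      - apply Rmult_le_compat_r; [left; apply Rinv_0_lt_compat; nra | lra]. }
    assert ((n - 2) / (n * (n - 1)) * (n + 1) < 1).
    { apply (Rmult_lt_reg_r (n * (n - 1))); [nra|].
      replace ((n - 2) / (n * (n - 1)) * (n + 1) * (n * (n - 1)))
        with ((n - 2) * (n + 1)) by (field; lra).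
      nra. }
    nra. }
  pose proof (mul_exp_lt_succ n x ltac:(lra) Hx).
  pose proof (exp_pos (delay_exponent a b s (n + 1))). nra.
Qed.

Lemma fhma_delay_minimizer_bounds a b s N : 0 <= a -> 0 <= b -> 0 <= s <= 1 -> (2 <= N)%nat ->
  (forall M, (2 <= M)%nat -> fhma_delay a b s (INR N) <= fhma_delay a b s (INR M)) ->
  a + b < INR N + 1 /\ INR N < a + b + 3.
Proof.
  intros Ha Hb Hs HN Hmin.
  assert (H2 : 2 <= INR N) by (apply (le_INR 2); exact HN).
  split.
  - apply Rnot_le_lt. intros Hle.
    pose proof (fhma_delay_succ_lt a b s (INR N) Ha Hb Hs H2 Hle).
    specialize (Hmin (S N) ltac:(lia)). rewrite S_INR in Hmin. lra.
  - destruct N as [|[|[|k]]]; [lia | lia | simpl; lra |].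
    apply Rnot_le_lt. intros Hle.
    assert (2 <= INR (S (S k))) by (apply (le_INR 2); lia).
    rewrite S_INR in Hle.
    pose proof (fhma_delay_lt_succ a b s (INR (S (S k))) Ha Hb Hs H ltac:(lra)).
    specialize (Hmin (S (S k)) ltac:(lia)). rewrite S_INR in Hmin. lra.
Qed.

Lemma ball_vol_pos d : 0 < ball_vol d.
Proof.
  enough (H : forall k, 0 < ball_vol k /\ 0 < ball_vol (S k)) by apply H.
  induction k as [|k [IH1 IH2]]; [cbn [ball_vol]; lra|]. split; [exact IH2|].
  change (ball_vol (S (S k))) with (2 * PI / INR (S (S k)) * ball_vol k).
  apply Rmult_lt_0_compat; [|exact IH1].
  apply Rdiv_lt_0_compat; [pose proof PI_RGT_0; lra | apply lt_0_INR; lia].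
Qed.

Lemma Cdelta_pos s : 0 < s < 1 -> 0 < Cdelta s.
Proof.
  intros Hs. unfold Cdelta. pose proof PI_RGT_0.
  apply Rdiv_lt_0_compat; [nra | apply sin_gt_0; nra].
Qed.

Lemma mean_delay_SS lambda r0 theta alpha W N0 d m :
  let s := INR d / alpha in
  mean_delay lambda r0 theta alpha W N0 d (S (S m)) =
  Finite (fhma_delay (lambda * ball_vol d * r0 ^ d * Rpower theta s * Cdelta s)
                     (theta * Rpower r0 alpha * W * N0) s (INR (S (S m)))).
Proof. reflexivity. Qed.

Lemma Zfloor_le_INR t n : t < INR n + 1 -> IZR (Zfloor t) <= INR n.
Proof.
  intros Ht. pose proof (Zfloor_ceil_bound t) as [Hf _].
  rewrite INR_IZR_INZ in *. apply IZR_le.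
  assert (IZR (Zfloor t) < IZR (Z.of_nat n + 1)) by (rewrite plus_IZR; lra).
  apply lt_IZR in H. lia.
Qed.

Lemma INR_le_Zceil_add2 t n : INR n < t + 3 -> INR n <= IZR (Zceil t) + 2.
Proof.
  intros Ht. pose proof (Zfloor_ceil_bound t) as [_ Hc].
  rewrite INR_IZR_INZ in *. rewrite <- plus_IZR. apply IZR_le.
  assert (IZR (Z.of_nat n) < IZR (Zceil t + 3)) by (rewrite plus_IZR; lra).
  apply lt_IZR in H. lia.
Qed.

Theorem theorem5 (d : nat) (lambda r0 theta alpha W N0 : R) (Nopt : nat) :
  (1 <= d)%nat ->
  0 < lambda -> 0 < r0 -> 0 < theta -> INR d < alpha ->
  0 < W -> 0 < N0 ->
  is_opt_subbands lambda r0 theta alpha W N0 d Nopt ->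
  let delta := INR d / alpha in
  let t0 := lambda * ball_vol d * r0 ^ d * Rpower theta delta * Cdelta delta
            + theta * Rpower r0 alpha * W * N0 in
  IZR (Zfloor t0) <= INR Nopt <= IZR (Zceil t0) + 2.
Proof.
  intros Hd Hl Hr Ht Ha HW HN [H1 Hopt] delta t0.
  assert (Hdelta : 0 < delta < 1).
  { assert (1 <= INR d) by (apply (le_INR 1); exact Hd).
    unfold delta. split; [apply Rdiv_lt_0_compat; lra|].
    apply (Rmult_lt_reg_r alpha); [lra|]. field_simplify; lra. }
  set (a := lambda * ball_vol d * r0 ^ d * Rpower theta delta * Cdelta delta) in t0.
  set (b := theta * Rpower r0 alpha * W * N0) in t0.
  assert (Ha0 : 0 <= a).
  { pose proof (ball_vol_pos d). pose proof (pow_lt r0 d Hr).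
    assert (0 < Rpower theta delta) by apply exp_pos. pose proof (Cdelta_pos delta Hdelta).
    left. repeat (apply Rmult_lt_0_compat; [|assumption]); assumption. }
  assert (Hb0 : 0 <= b).
  { assert (0 < Rpower r0 alpha) by apply exp_pos.
    left. repeat (apply Rmult_lt_0_compat; [|assumption]); assumption. }
  assert (Hs : 0 <= delta <= 1) by lra.
  assert (Hmd : forall k, mean_delay lambda r0 theta alpha W N0 d (S (S k))
                         = Finite (fhma_delay a b delta (INR (S (S k)))))
    by (intros; apply mean_delay_SS).
  (* D(1) = +oo is beaten by the finite D(2). *)
  destruct Nopt as [|[|m]]; [lia | now specialize (Hopt 2%nat ltac:(lia)) |].
  destruct (fhma_delay_minimizer_bounds a b delta (S (S m)) Ha0 Hb0 Hs ltac:(lia))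
    as [Hlow Hhigh].
  { intros [|[|k]] Hk; [lia | lia |].
    specialize (Hopt (S (S k)) ltac:(lia)). now rewrite !Hmd in Hopt. }
  split; [apply Zfloor_le_INR | apply INR_le_Zceil_add2]; unfold t0; lra.
Qed.
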